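(* Let $C=\operatorname{conv}(\gamma_1\cup\gamma_2\cup\gamma_3\cup\gamma_4)\subset\mathbb{R}^3$, where for $t\in[0,\pi/4]$ \[ \gamma_1(t)=(0,-\sin t,\cos t-1),\ \gamma_2(t)=(0,\cos t-1,-\sin t),\ \gamma_3(t)=(-\sin t,1-\cos t,0),\ \gamma_4(t)=(\cos t-1,\sin t,0) \] (here $\gamma_i$ also denotes the image curve). Then $F=\operatorname{conv}(\gamma_3\cup\gamma_4)$ is a face of $C$ containing $0$, and $\mathcal{T}(0;C)\cap\operatorname{span}F\neq\mathcal{T}(0;F)$; specifically $g=(0,-1,0)\in\mathcal{T}(0;C)\cap\operatorname{span}F$ but $g\notin\mathcal{T}(0;F)$. Consequently the closed convex cone $K=\operatorname{cone}(C\times\{1\})\subset\mathbb{R}^4$ is not tangentially exposed (and hence, by Theorem 3.1, not facially dual complete).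
   Context: Tangent cone: $\mathcal{T}(x;D)=\operatorname{cl}\{d: x+\epsilon d\in D\text{ for some }\epsilon>0\}$. A face of a closed convex set $D$ is a closed convex $F\subseteq D$ such that $x\in F$, $y,z\in D$, $x\in(y,z)$ imply $y,z\in F$. A closed convex cone $K$ is tangentially exposed if $\mathcal{T}(x;K)\cap\operatorname{span}F=\mathcal{T}(x;F)$ for every face $F\neq K$ and every $x\in F$. $\operatorname{cone}(S)=\{\lambda s:\lambda\ge0, s\in \operatorname{conv} S\}$. Theorem 3.1 states: every facially dual complete closed convex cone (one with $K^*+F^\perp$ closed for all nonempty faces $F\ne K$) is tangentially exposed. *)

From Stdlib Require Import Reals.
From Stdlib Require Fin.
Open Scope R_scope.

Definition vec (n : nat) := Fin.t n -> R.
Definition vzero {n} : vec n := fun _ => 0.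
Definition vadd {n} (x y : vec n) : vec n := fun i => x i + y i.
Definition vscale {n} (a : R) (x : vec n) : vec n := fun i => a * x i.

Fixpoint dot {n : nat} : vec n -> vec n -> R :=
  match n with
  | O => fun _ _ => 0
  | S m => fun x y => x Fin.F1 * y Fin.F1 +
                      @dot m (fun i => x (Fin.FS i)) (fun i => y (Fin.FS i))
  end.

Definition set_ (n : nat) := vec n -> Prop.
Definition subset {n} (A B : set_ n) := forall x, A x -> B x.
Definition set_eq {n} (A B : set_ n) := forall x, A x <-> B x.

Definition convex {n} (D : set_ n) :=
  forall x y t, D x -> D y -> 0 <= t <= 1 -> D (vadd (vscale t x) (vscale (1 - t) y)).
Definition conv {n} (S : set_ n) : set_ n :=
  fun x => forall D, convex D -> subset S D -> D x.

Definition subspace {n} (V : set_ n) :=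
  V vzero /\ (forall x y, V x -> V y -> V (vadd x y)) /\
  (forall a x, V x -> V (vscale a x)).
Definition span {n} (S : set_ n) : set_ n :=
  fun x => forall V, subspace V -> subset S V -> V x.

Definition closure {n} (S : set_ n) : set_ n :=
  fun x => forall eps, 0 < eps -> exists y, S y /\ forall i, Rabs (x i - y i) < eps.
Definition closed {n} (S : set_ n) := subset (closure S) S.

Definition tangent_cone {n} (x : vec n) (D : set_ n) : set_ n :=
  closure (fun d => exists eps, 0 < eps /\ D (vadd x (vscale eps d))).

Definition open_seg {n} (y z : vec n) : set_ n :=
  fun x => exists t, 0 < t < 1 /\ x = vadd (vscale t y) (vscale (1 - t) z).

Definition face {n} (F D : set_ n) :=
  closed F /\ convex F /\ subset F D /\
  forall x y z, F x -> D y -> D z -> open_seg y z x -> F y /\ F z.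

Definition cone {n} (S : set_ n) : set_ n :=
  fun x => exists lam s, 0 <= lam /\ conv S s /\ x = vscale lam s.

Definition is_cone {n} (K : set_ n) :=
  forall a x, 0 <= a -> K x -> K (vscale a x).

Definition tangentially_exposed {n} (K : set_ n) :=
  forall F, face F K -> ~ set_eq F K -> forall x, F x ->
    set_eq (fun d => tangent_cone x K d /\ span F d) (tangent_cone x F).

Definition dual_cone {n} (K : set_ n) : set_ n :=
  fun y => forall x, K x -> 0 <= dot y x.
Definition orth {n} (F : set_ n) : set_ n :=
  fun y => forall x, F x -> dot y x = 0.
Definition msum {n} (A B : set_ n) : set_ n :=
  fun z => exists a b, A a /\ B b /\ z = vadd a b.

Definition facially_dual_complete {n} (K : set_ n) :=
  forall F, face F K -> (exists x, F x) -> ~ set_eq F K ->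
    closed (msum (dual_cone K) (orth F)).

Definition mk3 (a b c : R) : vec 3 :=
  fun i => match proj1_sig (Fin.to_nat i) with 0%nat => a | 1%nat => b | _ => c end.
Definition mk4 (a b c d : R) : vec 4 :=
  fun i => match proj1_sig (Fin.to_nat i) with
           0%nat => a | 1%nat => b | 2%nat => c | _ => d end.

Definition gamma1 (t : R) := mk3 0 (- sin t) (cos t - 1).
Definition gamma2 (t : R) := mk3 0 (cos t - 1) (- sin t).
Definition gamma3 (t : R) := mk3 (- sin t) (1 - cos t) 0.
Definition gamma4 (t : R) := mk3 (cos t - 1) (sin t) 0.

Definition curve (g : R -> vec 3) : set_ 3 :=
  fun p => exists t, 0 <= t <= PI / 4 /\ p = g t.

Definition Cset : set_ 3 :=
  conv (fun p => curve gamma1 p \/ curve gamma2 p \/ curve gamma3 p \/ curve gamma4 p).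
Definition Fface : set_ 3 :=
  conv (fun p => curve gamma3 p \/ curve gamma4 p).
Definition gvec : vec 3 := mk3 0 (-1) 0.

Definition lift1 (c : vec 3) : vec 4 :=
  mk4 (c Fin.F1) (c (Fin.FS Fin.F1)) (c (Fin.FS (Fin.FS Fin.F1))) 1.
Definition Kcone : set_ 4 := cone (fun p => exists c, Cset c /\ p = lift1 c).

(* The plane z = 0 supports C and meets it exactly in F, since gamma1 and gamma2 leave it
   downwards; so F is an exposed face, and so is its homogenization in K. The chords
   gamma1 t / sin t = (0, -1, -(1 - cos t) / sin t) tend to g = (0,-1,0) because 1 - cos t is
   quadratic in t. Thus g is tangent to C at 0 and lies in the plane of F, but F lies in the
   half-space y >= 0, so g is not tangent to F; lifting g to (g,0) gives the same failure for K
   at (0,0,0,1). The same second-order contact shows that K is not facially dual complete: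
   (0,1,0,0) is a limit of (0,1,-lam,e) + (0,0,lam,0) with lam e = 2 + e, the summands lying in
   the dual of K and in the orthogonal of the face, whereas no dual vector with vanishing last
   coordinate has a positive second coordinate. Closedness of C, F and K follows from
   Caratheodory's theorem and compactness of the parameters of 4-point combinations. *)

From Stdlib Require Import ZArith Reals Lra Lia Psatz Classical ClassicalEpsilon FunctionalExtensionality PropExtensionality.
Open Scope R_scope.

Notation ix := Fin.F1.
Notation iy := (Fin.FS Fin.F1).
Notation iz := (Fin.FS (Fin.FS Fin.F1)).
Notation iw := (Fin.FS (Fin.FS (Fin.FS Fin.F1))).

Lemma conv_convex {n} (S : set_ n) : convex (conv S).
Proof. intros x y t Hx Hy Ht D HD HS. apply HD; [apply Hx|apply Hy|]; auto. Qed.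

Lemma subset_conv {n} (S : set_ n) : subset S (conv S).
Proof. intros x Hx D HD HS; auto. Qed.

Lemma conv_mono {n} (S T : set_ n) : subset S T -> subset (conv S) (conv T).
Proof. intros HST x Hx D HD HT. apply Hx; auto. intros y Hy; apply HT, HST, Hy. Qed.

Lemma face_of_support {n} (l : vec n -> R) (F D : set_ n) :
  (forall x y t, l (vadd (vscale t x) (vscale (1 - t) y)) = t * l x + (1 - t) * l y) ->
  closed F -> convex F -> subset F D ->
  (forall x, D x -> l x <= 0) -> (forall x, F x -> l x = 0) ->
  (forall x, D x -> l x = 0 -> F x) -> face F D.
Proof.
  intros Hl HFc HFconv HFD Hle HF0 HD0.
  split; [|split; [|split]]; auto.
  intros x y z Fx Dy Dz [t [Ht ->]].
  assert (Hx := HF0 _ Fx). rewrite Hl in Hx.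
  assert (Hy := Hle y Dy). assert (Hz := Hle z Dz).
  split; apply HD0; auto; nra.
Qed.

Lemma tangent_cone_coord_ge0 {n} (D : set_ n) x i d :
  (forall p, D p -> 0 <= p i) -> x i = 0 -> tangent_cone x D d -> 0 <= d i.
Proof.
  intros HD Hx Hd. apply Rnot_lt_le; intro Hneg.
  destruct (Hd (- d i) ltac:(lra)) as [y [[e [He Hy]] Hclose]].
  assert (Hpos := HD _ Hy). unfold vadd, vscale in Hpos. rewrite Hx in Hpos.
  specialize (Hclose i). apply Rabs_def2 in Hclose. nra.
Qed.

Lemma fin3_ind (P : Fin.t 3 -> Prop) : P ix -> P iy -> P iz -> forall i, P i.
Proof.
  intros H1 H2 H3 i.
  pattern i; apply Fin.caseS'; [exact H1|]. clear i; intro i.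
  pattern i; apply Fin.caseS'; [exact H2|]. clear i; intro i.
  pattern i; apply Fin.caseS'; [exact H3|]. clear i; intro i.
  apply Fin.case0; exact i.
Qed.

Lemma fin4_ind (P : Fin.t 4 -> Prop) : P ix -> P iy -> P iz -> P iw -> forall i, P i.
Proof.
  intros H1 H2 H3 H4 i.
  pattern i; apply Fin.caseS'; [exact H1|]. clear i.
  exact (fin3_ind (fun j => P (Fin.FS j)) H2 H3 H4).
Qed.

Lemma vec3_ext (x y : vec 3) : x ix = y ix -> x iy = y iy -> x iz = y iz -> x = y.
Proof. intros; apply functional_extensionality; apply fin3_ind; auto. Qed.

Lemma vec4_ext (x y : vec 4) :
  x ix = y ix -> x iy = y iy -> x iz = y iz -> x iw = y iw -> x = y.
Proof. intros; apply functional_extensionality; apply fin4_ind; auto. Qed.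

(** * Finite sums and linear dependence *)

Fixpoint fsum (m : nat) (f : nat -> R) : R :=
  match m with O => 0 | S k => fsum k f + f k end.

Lemma fsum_ext m f g : (forall i, (i < m)%nat -> f i = g i) -> fsum m f = fsum m g.
Proof.
  induction m; simpl; intros H; auto.
  rewrite IHm by (intros; apply H; lia). rewrite H by lia. auto.
Qed.

Lemma fsum_scal m a f : fsum m (fun i => a * f i) = a * fsum m f.
Proof. induction m; simpl; [ring|rewrite IHm; ring]. Qed.

Lemma fsum_plus m f g : fsum m (fun i => f i + g i) = fsum m f + fsum m g.
Proof. induction m; simpl; [ring|rewrite IHm; ring]. Qed.

Lemma fsum_zero m : fsum m (fun _ => 0) = 0.
Proof. induction m; simpl; [ring|rewrite IHm; ring]. Qed.

Lemma fsum_nonneg m f : (forall i, (i < m)%nat -> 0 <= f i) -> 0 <= fsum m f.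
Proof.
  induction m; simpl; intros H; [lra|].
  assert (0 <= fsum m f) by (apply IHm; intros; apply H; lia).
  assert (0 <= f m) by (apply H; lia). lra.
Qed.

Lemma fsum_le_term m f i :
  (forall k, (k < m)%nat -> 0 <= f k) -> (i < m)%nat -> f i <= fsum m f.
Proof.
  induction m; intros H Hi; [lia|]. simpl.
  assert (0 <= fsum m f) by (apply fsum_nonneg; intros; apply H; lia).
  destruct (Nat.eq_dec i m) as [->|]; [lra|].
  assert (f i <= fsum m f) by (apply IHm; [intros; apply H; lia|lia]).
  assert (0 <= f m) by (apply H; lia). lra.
Qed.

Lemma fsum_nonneg_eq0 m f :
  (forall i, (i < m)%nat -> 0 <= f i) -> fsum m f = 0 -> forall i, (i < m)%nat -> f i = 0.
Proof.
  intros H Hs i Hi. assert (Hle := fsum_le_term m f i H Hi). assert (Hnn := H i Hi). lra.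
Qed.

Lemma fsum_app m1 m2 f : fsum (m1 + m2) f = fsum m1 f + fsum m2 (fun i => f (m1 + i)%nat).
Proof.
  induction m2; simpl; [rewrite Nat.add_0_r; ring|].
  rewrite Nat.add_succ_r; simpl; rewrite IHm2; ring.
Qed.

Lemma fsum_pad n m f :
  (m <= n)%nat -> fsum n (fun i => if Nat.ltb i m then f i else 0) = fsum m f.
Proof.
  induction n; intros H.
  - replace m with 0%nat by lia; reflexivity.
  - destruct (Nat.eq_dec m (S n)) as [->|Hne].
    + apply fsum_ext; intros i Hi; destruct (Nat.ltb_spec i (S n)); [auto|lia].
    + simpl. rewrite IHn by lia. destruct (Nat.ltb_spec n m); [lia|ring].
Qed.

Definition skip_at (p i : nat) : nat := if Nat.ltb i p then i else S i.
Definition unskip_at (p i : nat) : nat := if Nat.ltb i p then i else pred i.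

Lemma skip_at_neq p i : skip_at p i <> p.
Proof. unfold skip_at; destruct (Nat.ltb_spec i p); lia. Qed.

Lemma unskip_at_skip p i : unskip_at p (skip_at p i) = i.
Proof.
  unfold skip_at, unskip_at; destruct (Nat.ltb_spec i p);
  [destruct (Nat.ltb_spec i p)|destruct (Nat.ltb_spec (S i) p)]; lia.
Qed.

Lemma skip_at_lt p i m : (i < m)%nat -> (skip_at p i < S m)%nat.
Proof. unfold skip_at; destruct (Nat.ltb_spec i p); lia. Qed.

Lemma fsum_skip m f p : (p <= m)%nat -> fsum (S m) f = f p + fsum m (fun i => f (skip_at p i)).
Proof.
  induction m; intros Hp.
  - replace p with 0%nat by lia; cbn [fsum]; lra.
  - change (fsum (S (S m)) f) with (fsum (S m) f + f (S m)).
    destruct (Nat.eq_dec p (S m)) as [->|Hne].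
    + rewrite (fsum_ext (S m) (fun i => f (skip_at (S m) i)) f); [ring|].
      intros i Hi; unfold skip_at; destruct (Nat.ltb_spec i (S m)); [auto|lia].
    + rewrite IHm by lia. cbn [fsum].
      replace (skip_at p m) with (S m) by (unfold skip_at; destruct (Nat.ltb_spec m p); lia).
      ring.
Qed.

Lemma fsum_remove_coeff m (f : nat -> R) (mu : nat -> R) p X :
  (p <= m)%nat ->
  fsum (S m) (fun i => (if Nat.eqb i p then X else mu (unskip_at p i)) * f i) =
  X * f p + fsum m (fun i => mu i * f (skip_at p i)).
Proof.
  intro Hp. rewrite (fsum_skip m _ p Hp), Nat.eqb_refl. f_equal.
  apply fsum_ext; intros i _.
  destruct (Nat.eqb_spec (skip_at p i) p) as [e|_]; [exfalso; exact (skip_at_neq p i e)|].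
  rewrite unskip_at_skip; reflexivity.
Qed.

(* [v i j] is the j-th coordinate of the i-th vector; Gaussian elimination on coordinate k. *)
Lemma exists_lin_dep : forall k m (v : nat -> nat -> R), (k < m)%nat ->
  exists mu, (exists i, (i < m)%nat /\ mu i <> 0) /\
    forall j, (j < k)%nat -> fsum m (fun i => mu i * v i j) = 0.
Proof.
  induction k; intros m v Hkm.
  { exists (fun _ => 1); split; [exists 0%nat; split; [lia|lra]|intros; lia]. }
  destruct (classic (forall i, (i < m)%nat -> v i k = 0)) as [Hz|Hnz].
  - destruct (IHk m v ltac:(lia)) as [mu [Hnt Hs]].
    exists mu; split; auto. intros j Hj.
    destruct (Nat.eq_dec j k) as [->|]; [|apply Hs; lia].
    rewrite (fsum_ext m _ (fun _ => 0)); [apply fsum_zero|].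
    intros i Hi; rewrite Hz by auto; ring.
  - apply not_all_ex_not in Hnz; destruct Hnz as [p Hp].
    apply imply_to_and in Hp; destruct Hp as [Hpm Hvp].
    destruct m as [|m']; [lia|].
    set (w := fun i j => v (skip_at p i) j - v (skip_at p i) k / v p k * v p j).
    destruct (IHk m' w ltac:(lia)) as [nu [[i0 [Hi0 Hnu0]] Hs]].
    set (X := - fsum m' (fun i => nu i * v (skip_at p i) k) / v p k).
    exists (fun i => if Nat.eqb i p then X else nu (unskip_at p i)). split.
    + exists (skip_at p i0); split; [apply skip_at_lt; auto|].
      destruct (Nat.eqb_spec (skip_at p i0) p) as [e|_]; [exfalso; exact (skip_at_neq p i0 e)|].
      rewrite unskip_at_skip; auto.
    + intros j Hj. rewrite (fsum_remove_coeff m' (fun i => v i j) nu p X) by lia.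
      destruct (Nat.eq_dec j k) as [->|Hjk]; [unfold X; field; auto|].
      assert (Hw := Hs j ltac:(lia)). unfold w in Hw.
      rewrite (fsum_ext m' _ (fun i => nu i * v (skip_at p i) j +
                 (- (v p j / v p k)) * (nu i * v (skip_at p i) k))) in Hw by (intros; field; auto).
      rewrite fsum_plus, fsum_scal in Hw. unfold X.
      replace (- fsum m' (fun i => nu i * v (skip_at p i) k) / v p k * v p j)
        with (- (v p j / v p k) * fsum m' (fun i => nu i * v (skip_at p i) k)) by (field; auto).
      lra.
Qed.

(** * Convergent subsequences *)

Definition extraction (phi : nat -> nat) := forall n, (phi n < phi (S n))%nat.

Lemma extraction_ge phi : extraction phi -> forall n, (n <= phi n)%nat.
Proof. intros H n; induction n; [lia|]. specialize (H n); lia. Qed.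

Lemma extraction_mono phi : extraction phi -> forall n m, (n <= m)%nat -> (phi n <= phi m)%nat.
Proof. intros H n m Hnm; induction Hnm; [lia|]. specialize (H m); lia. Qed.

Lemma extraction_comp phi psi : extraction phi -> extraction psi -> extraction (fun n => phi (psi n)).
Proof.
  intros H1 H2 n. specialize (H2 n).
  assert (Hm := extraction_mono phi H1 (S (psi n)) (psi (S n)) ltac:(lia)).
  specialize (H1 (psi n)). lia.
Qed.

Lemma Un_cv_extraction (w : nat -> R) l phi :
  extraction phi -> Un_cv w l -> Un_cv (fun n => w (phi n)) l.
Proof.
  intros Hp Hc eps He. destruct (Hc eps He) as [N HN]. exists N; intros n Hn.
  apply HN. assert (H := extraction_ge phi Hp n). lia.
Qed.

Lemma Un_cv_le_const (w : nat -> R) l b : Un_cv w l -> (forall n, w n <= b) -> l <= b.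
Proof.
  intros Hc Hb. apply Rnot_lt_le; intro Hn.
  destruct (Hc (l - b) ltac:(lra)) as [N HN]. specialize (HN N (le_n N)). specialize (Hb N).
  unfold Rdist in HN. apply Rabs_def2 in HN. lra.
Qed.

Lemma Un_cv_ge_const (w : nat -> R) l a : Un_cv w l -> (forall n, a <= w n) -> a <= l.
Proof.
  intros Hc Hb. apply Rnot_lt_le; intro Hn.
  destruct (Hc (a - l) ltac:(lra)) as [N HN]. specialize (HN N (le_n N)). specialize (Hb N).
  unfold Rdist in HN. apply Rabs_def2 in HN. lra.
Qed.

Lemma Un_cv_const c : Un_cv (fun _ => c) c.
Proof. intros eps He; exists 0%nat; intros; unfold Rdist; rewrite Rminus_diag, Rabs_R0; auto. Qed.

Lemma Un_cv_eventually_eq (w v : nat -> R) l N :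
  (forall n, (N <= n)%nat -> w n = v n) -> Un_cv v l -> Un_cv w l.
Proof.
  intros He Hc eps Heps. destruct (Hc eps Heps) as [M HM]. exists (N + M)%nat; intros n Hn.
  rewrite He by lia; apply HM; lia.
Qed.

Lemma Un_cv_fsum : forall m (f : nat -> nat -> R) g,
  (forall i, (i < m)%nat -> Un_cv (fun n => f n i) (g i)) ->
  Un_cv (fun n => fsum m (f n)) (fsum m g).
Proof.
  induction m; intros f g H; simpl; [apply Un_cv_const|].
  apply CV_plus; [apply IHm; intros; apply H; lia|apply H; lia].
Qed.

Lemma inv_INR_S_pos n : 0 < / INR (S n).
Proof. apply Rinv_0_lt_compat, lt_0_INR; lia. Qed.

Lemma Un_cv_of_rate (w : nat -> R) l : (forall n, Rabs (w n - l) < / INR (S n)) -> Un_cv w l.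
Proof.
  intros H eps He.
  assert (Hie : 0 < / eps) by (apply Rinv_0_lt_compat; auto).
  destruct (archimed (/ eps)) as [Hup _].
  assert (Hz : (0 <= up (/ eps))%Z) by (apply le_IZR; simpl; lra).
  exists (Z.to_nat (up (/ eps))). intros n Hn. unfold Rdist.
  eapply Rlt_le_trans; [apply H|].
  assert (HINR : / eps < INR (S n)).
  { rewrite S_INR. apply le_INR in Hn. rewrite INR_IZR_INZ, Z2Nat.id in Hn by auto. lra. }
  rewrite <- (Rinv_inv eps). apply Rlt_le, Rinv_lt_contravar; auto. nra.
Qed.

Lemma Un_cv_INR_eventually_const (c : nat -> nat) l : Un_cv (fun n => INR (c n)) l ->
  exists a N, forall n, (N <= n)%nat -> c n = a.
Proof.
  intro H. destruct (H (1/2) ltac:(lra)) as [N HN]. exists (c N), N. intros n Hn.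
  assert (H1 := HN n Hn). assert (H2 := HN N (le_n N)). unfold Rdist in *.
  apply Rabs_def2 in H1; apply Rabs_def2 in H2.
  destruct (Nat.lt_trichotomy (c n) (c N)) as [Hl|[Hl|Hl]]; auto;
    apply (le_INR (S _)) in Hl; rewrite S_INR in Hl; lra.
Qed.

Lemma eventually_const_family (c : nat -> nat -> nat) : forall m,
  (forall i, (i < m)%nat -> exists a N, forall n, (N <= n)%nat -> c n i = a) ->
  exists (A : nat -> nat) N, forall i, (i < m)%nat -> forall n, (N <= n)%nat -> c n i = A i.
Proof.
  induction m; intros H; [exists (fun _ => 0%nat), 0%nat; intros; lia|].
  destruct (IHm ltac:(intros; apply H; lia)) as [A [N HA]].
  destruct (H m ltac:(lia)) as [a [Nm Ha]].
  exists (fun i => if Nat.eqb i m then a else A i), (N + Nm)%nat.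
  intros i Hi n Hn. destruct (Nat.eqb_spec i m) as [->|]; [apply Ha; lia|apply HA; lia].
Qed.

Lemma bounded_cv_extraction (u : nat -> R) a b : (forall n, a <= u n <= b) ->
  exists l phi, extraction phi /\ Un_cv (fun n => u (phi n)) l.
Proof.
  intros Hb.
  destruct (Bolzano_Weierstrass u (fun c => a <= c <= b) (compact_P3 a b) Hb) as [l Hl].
  assert (H : forall N k, exists p, (N <= p)%nat /\ Rabs (u p - l) < / INR (S k)).
  { intros N k. destruct (Hl (fun y => Rabs (y - l) < / INR (S k)) N) as [p [Hp Hv]].
    - exists (mkposreal _ (inv_INR_S_pos k)). intros y Hy; exact Hy.
    - exists p; auto. }
  destruct (choice (fun Nk p => (fst Nk <= p)%nat /\ Rabs (u p - l) < / INR (S (snd Nk))))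
    as [pick Hpick]; [intros [N k]; apply H|].
  set (phi := fix phi n := match n with O => pick (O, O) | S m => pick (S (phi m), S m) end).
  exists l, phi. split.
  - intro n. simpl. destruct (Hpick (S (phi n), S n)); simpl in *; lia.
  - apply Un_cv_of_rate; intro n; destruct n; apply (Hpick (_, _)).
Qed.

Lemma bounded_family_cv_extraction : forall k (u : nat -> nat -> R) a b,
  (forall n i, (i < k)%nat -> a <= u n i <= b) ->
  exists l phi, extraction phi /\ forall i, (i < k)%nat -> Un_cv (fun n => u (phi n) i) (l i).
Proof.
  induction k; intros u a b Hb.
  - exists (fun _ => 0), (fun n => n); split; [intro; lia|intros; lia].
  - destruct (IHk u a b ltac:(intros; apply Hb; lia)) as [l1 [phi1 [Hp1 Hc1]]].
    destruct (bounded_cv_extraction (fun n => u (phi1 n) k) a b ltac:(intros; apply Hb; lia))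
      as [lk [phi2 [Hp2 Hc2]]].
    exists (fun i => if Nat.eqb i k then lk else l1 i), (fun n => phi1 (phi2 n)).
    split; [apply extraction_comp; auto|].
    intros i Hi. destruct (Nat.eqb_spec i k) as [->|Hne]; auto.
    apply (Un_cv_extraction (fun n => u (phi1 n) i)); auto. apply Hc1; lia.
Qed.

(** * Convex hulls of finitely many curves *)

Lemma convex_fsum_mem {n} : forall m lam (p : nat -> vec n) (D : set_ n), convex D ->
  (forall i, (i < m)%nat -> 0 <= lam i /\ D (p i)) -> fsum m lam = 1 ->
  D (fun j => fsum m (fun i => lam i * p i j)).
Proof.
  induction m; intros lam p D HD Hp Hs; simpl in Hs; [lra|].
  assert (Hnn : forall i, (i < m)%nat -> 0 <= lam i) by (intros; apply Hp; lia).
  assert (Hlm : 0 <= lam m) by (apply Hp; lia).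
  assert (H0 : 0 <= fsum m lam) by (apply fsum_nonneg; auto).
  destruct (Req_dec (fsum m lam) 0) as [Hz|Hnz].
  - assert (Hz' := fsum_nonneg_eq0 m lam Hnn Hz).
    replace (fun j => fsum (S m) (fun i => lam i * p i j)) with (p m); [apply Hp; lia|].
    apply functional_extensionality; intro j; simpl.
    rewrite (fsum_ext m _ (fun _ => 0)) by (intros i Hi; rewrite Hz' by auto; ring).
    rewrite fsum_zero. replace (lam m) with 1 by lra; ring.
  - set (s := fsum m lam).
    assert (Hs0 : 0 < s) by (unfold s; lra).
    assert (Hy : D (fun j => fsum m (fun i => (lam i / s) * p i j))).
    { apply IHm; auto.
      - intros i Hi; split; [apply Rmult_le_pos; [auto|apply Rlt_le, Rinv_0_lt_compat; lra]|apply Hp; lia].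
      - unfold Rdiv. rewrite (fsum_ext m _ (fun i => / s * lam i)) by (intros; ring).
        rewrite fsum_scal. unfold s; field; auto. }
    assert (Hc := HD _ _ s Hy (proj2 (Hp m (Nat.lt_succ_diag_r m))) ltac:(unfold s; lra)).
    replace (fun j => fsum (S m) (fun i => lam i * p i j)) with
      (vadd (vscale s (fun j => fsum m (fun i => lam i / s * p i j))) (vscale (1 - s) (p m))); auto.
    apply functional_extensionality; intro j; unfold vadd, vscale; simpl.
    rewrite (fsum_ext m _ (fun i => / s * (lam i * p i j))) by (intros; unfold Rdiv; ring).
    rewrite fsum_scal. replace (1 - s) with (lam m) by (unfold s; lra).
    field; lra.
Qed.

(* A linear dependence of the m + 1 >= 5 vectors (P i, 1) of R^4. *)
Lemma exists_affine_dep (P : nat -> vec 3) m : (4 <= m)%nat ->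
  exists mu, (exists i, (i < S m)%nat /\ 0 < mu i) /\ fsum (S m) mu = 0 /\
    forall j, fsum (S m) (fun i => mu i * P i j) = 0.
Proof.
  intro Hm.
  set (v := fun i j => match j with 0%nat => P i ix | 1%nat => P i iy
                       | 2%nat => P i iz | _ => 1 end).
  destruct (exists_lin_dep 4 (S m) v ltac:(lia)) as [mu [[i0 [Hi0 Hmu0]] Hdep]].
  assert (Hsum : fsum (S m) mu = 0).
  { rewrite <- (Hdep 3%nat ltac:(lia)). apply fsum_ext; intros; unfold v; ring. }
  assert (Hpos : exists i, (i < S m)%nat /\ 0 < mu i).
  { apply NNPP; intro Hn.
    assert (Hle : forall i, (i < S m)%nat -> 0 <= - mu i).
    { intros i Hi. destruct (Rlt_dec 0 (mu i)); [exfalso; apply Hn; exists i; auto|lra]. }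
    assert (Hz : fsum (S m) (fun i => - mu i) = 0).
    { rewrite (fsum_ext _ _ (fun i => (-1) * mu i)) by (intros; ring).
      rewrite fsum_scal, Hsum; ring. }
    assert (H0 := fsum_nonneg_eq0 _ _ Hle Hz i0 Hi0). lra. }
  exists mu; split; [exact Hpos|split; [exact Hsum|]].
  apply fin3_ind.
  - rewrite <- (Hdep 0%nat ltac:(lia)); apply fsum_ext; reflexivity.
  - rewrite <- (Hdep 1%nat ltac:(lia)); apply fsum_ext; reflexivity.
  - rewrite <- (Hdep 2%nat ltac:(lia)); apply fsum_ext; reflexivity.
Qed.

Lemma exists_min_ratio : forall m (mu lam : nat -> R), (exists i, (i < m)%nat /\ 0 < mu i) ->
  exists q, (q < m)%nat /\ 0 < mu q /\
    forall i, (i < m)%nat -> 0 < mu i -> lam q / mu q <= lam i / mu i.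
Proof.
  induction m; intros mu lam [i0 [Hi0 Hm0]]; [lia|].
  destruct (classic (exists i, (i < m)%nat /\ 0 < mu i)) as [Hex|Hnex].
  - destruct (IHm mu lam Hex) as [q [Hq [Hmq Hmin]]].
    destruct (Rlt_dec 0 (mu m)) as [Hpm|Hpm];
      [destruct (Rlt_dec (lam m / mu m) (lam q / mu q)) as [Hlt|Hge]|].
    + exists m; split; [lia|split; auto]. intros i Hi Hmi.
      destruct (Nat.eq_dec i m) as [->|]; [lra|]. specialize (Hmin i ltac:(lia) Hmi); lra.
    + exists q; split; [lia|split; auto]. intros i Hi Hmi.
      destruct (Nat.eq_dec i m) as [->|]; [lra|]. apply Hmin; auto; lia.
    + exists q; split; [lia|split; auto]. intros i Hi Hmi.
      destruct (Nat.eq_dec i m) as [->|]; [lra|]. apply Hmin; auto; lia.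
  - assert (i0 = m) as ->.
    { destruct (Nat.eq_dec i0 m); auto. exfalso; apply Hnex; exists i0; split; auto; lia. }
    exists m; split; [lia|split; auto]. intros i Hi Hmi.
    destruct (Nat.eq_dec i m) as [->|]; [lra|]. exfalso; apply Hnex; exists i; split; auto; lia.
Qed.

Section CurveFamily.

Variable gs : nat -> R -> vec 3.
Variable m0 : nat.

Definition curves_union : set_ 3 :=
  fun p => exists a t, (a < m0)%nat /\ 0 <= t <= PI/4 /\ p = gs a t.

Definition admissible m (lam : nat -> R) (c : nat -> nat) (t : nat -> R) :=
  forall i, (i < m)%nat -> 0 <= lam i /\ (c i < m0)%nat /\ 0 <= t i <= PI/4.

Definition comb m lam c t : vec 3 := fun j => fsum m (fun i => lam i * gs (c i) (t i) j).

Definition conv_rep m x := exists lam c t,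
  admissible m lam c t /\ fsum m lam = 1 /\ forall j, x j = comb m lam c t j.

Lemma conv_rep_conv m x : conv_rep m x -> conv curves_union x.
Proof.
  intros [lam [c [t [Hi [Hs Hx]]]]] D HD HS.
  replace x with (fun j => fsum m (fun i => lam i * gs (c i) (t i) j))
    by (apply functional_extensionality; intro j; rewrite Hx; auto).
  apply convex_fsum_mem; auto. intros i Him; destruct (Hi i Him) as [? [? ?]]; split; auto.
  apply HS; exists (c i), (t i); auto.
Qed.

Lemma conv_rep_convex : convex (fun x => exists m, conv_rep m x).
Proof.
  intros y z s [m1 [l1 [c1 [t1 [H1 [S1 X1]]]]]] [m2 [l2 [c2 [t2 [H2 [S2 X2]]]]]] Hs.
  set (glue := fun {A} (f1 f2 : nat -> A) i => if Nat.ltb i m1 then f1 i else f2 (i - m1)%nat).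
  exists (m1 + m2)%nat, (glue _ (fun i => s * l1 i) (fun i => (1 - s) * l2 i)),
    (glue _ c1 c2), (glue _ t1 t2).
  assert (Hlow : forall A (f1 f2 : nat -> A) i, (i < m1)%nat -> glue _ f1 f2 i = f1 i).
  { intros A f1 f2 i Hi; unfold glue; destruct (Nat.ltb_spec i m1); [auto|lia]. }
  assert (Hhigh : forall A (f1 f2 : nat -> A) i, glue _ f1 f2 (m1 + i)%nat = f2 i).
  { intros A f1 f2 i; unfold glue; destruct (Nat.ltb_spec (m1 + i) m1); [lia|].
    f_equal; lia. }
  split; [|split].
  - intros i Hi; destruct (Nat.lt_ge_cases i m1) as [Hlt|Hge].
    + rewrite !Hlow by auto. destruct (H1 i) as [? [? ?]]; auto; repeat split; auto; nra.
    + replace i with (m1 + (i - m1))%nat by lia. rewrite !Hhigh.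
      destruct (H2 (i - m1)%nat) as [? [? ?]]; [lia|]; repeat split; auto; nra.
  - rewrite fsum_app, (fsum_ext m1 _ (fun i => s * l1 i)) by (intros; apply Hlow; auto).
    rewrite (fsum_ext m2 _ (fun i => (1 - s) * l2 i)) by (intros; apply Hhigh).
    rewrite !fsum_scal, S1, S2; ring.
  - intro j; unfold vadd, vscale, comb; rewrite X1, X2, fsum_app. unfold comb.
    rewrite <- !fsum_scal. f_equal; apply fsum_ext; intros i Hi.
    + rewrite !Hlow by auto; ring.
    + rewrite !Hhigh; ring.
Qed.

Lemma conv_conv_rep x : conv curves_union x -> exists m, conv_rep m x.
Proof.
  intro Hx; apply Hx; [exact conv_rep_convex|].
  intros p [a [t [Ha [Ht ->]]]].
  exists 1%nat, (fun _ => 1), (fun _ => a), (fun _ => t).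
  split; [intros; repeat split; auto; lra|split; [simpl; ring|intro j; unfold comb; simpl; ring]].
Qed.

(* Caratheodory: an affine dependence among the m + 1 points lets one weight drop to zero. *)
Lemma conv_rep_reduce m x : (4 <= m)%nat -> conv_rep (S m) x -> conv_rep m x.
Proof.
  intros Hm [lam [c [t [Hi [Hs Hx]]]]].
  set (P := fun i => gs (c i) (t i)).
  destruct (exists_affine_dep P m Hm) as [mu [Hpos [Hs1 Hc]]].
  destruct (exists_min_ratio (S m) mu lam Hpos) as [q [Hq [Hmq Hmin]]].
  set (tau := lam q / mu q).
  assert (Htau : 0 <= tau).
  { apply Rmult_le_pos; [apply Hi; auto|apply Rlt_le, Rinv_0_lt_compat; auto]. }
  set (lam' := fun i => lam i - tau * mu i).
  assert (Hl'q : lam' q = 0) by (unfold lam', tau; field; lra).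
  assert (Hl'nn : forall i, (i < S m)%nat -> 0 <= lam' i).
  { intros i Hi'. unfold lam'. destruct (Hi i Hi') as [Hli _].
    destruct (Rlt_dec 0 (mu i)) as [Hp|Hp]; [|nra].
    specialize (Hmin i Hi' Hp). fold tau in Hmin.
    apply (Rmult_le_compat_r (mu i)) in Hmin; [|lra].
    unfold Rdiv in Hmin. rewrite Rmult_assoc, Rinv_l in Hmin by lra. lra. }
  exists (fun i => lam' (skip_at q i)), (fun i => c (skip_at q i)), (fun i => t (skip_at q i)).
  split; [|split].
  - intros i Hi'. assert (Hsk := skip_at_lt q i m Hi').
    destruct (Hi _ Hsk) as [_ [? ?]]. split; auto.
  - assert (E : fsum (S m) lam' = 1).
    { unfold lam'. rewrite (fsum_ext _ _ (fun i => lam i + (- tau) * mu i)) by (intros; ring).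
      rewrite fsum_plus, fsum_scal, Hs, Hs1; ring. }
    rewrite (fsum_skip m lam' q) in E by lia. lra.
  - intro j. assert (E : fsum (S m) (fun i => lam' i * P i j) = x j).
    { unfold lam'. rewrite (fsum_ext _ _ (fun i => lam i * P i j + (- tau) * (mu i * P i j))) by (intros; ring).
      rewrite fsum_plus, fsum_scal, Hc, Hx; unfold P, comb; ring. }
    rewrite (fsum_skip m _ q), Hl'q in E by lia. unfold P in E. unfold comb. lra.
Qed.

Lemma conv_rep_pad m x : (m <= 4)%nat -> conv_rep m x -> conv_rep 4 x.
Proof.
  intros Hle [lam [c [t [Hi [Hs Hx]]]]].
  destruct m as [|m]; [simpl in Hs; lra|].
  exists (fun i => if Nat.ltb i (S m) then lam i else 0),
    (fun i => if Nat.ltb i (S m) then c i else c 0%nat),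
    (fun i => if Nat.ltb i (S m) then t i else t 0%nat).
  split; [|split].
  - intros i Hi4. destruct (Nat.ltb_spec i (S m)); [apply Hi; auto|].
    destruct (Hi 0%nat ltac:(lia)) as [? [? ?]]; repeat split; auto; lra.
  - rewrite fsum_pad; auto.
  - intro j; rewrite Hx; unfold comb; rewrite <- (fsum_pad 4 (S m)) by auto.
    apply fsum_ext; intros i Hi5; destruct (Nat.ltb_spec i (S m)); ring.
Qed.

Lemma conv_conv_rep4 x : conv curves_union x -> conv_rep 4 x.
Proof.
  intro H; destruct (conv_conv_rep x H) as [m Hm]. clear H. revert x Hm.
  induction m; intros x Hm.
  - apply (conv_rep_pad 0); auto; lia.
  - destruct (Compare_dec.le_lt_dec (S m) 4) as [Hle|Hlt].
    + apply (conv_rep_pad (S m)); auto.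
    + apply IHm, conv_rep_reduce; auto; lia.
Qed.

Lemma conv_curves_closure_reps x : closure (conv curves_union) x ->
  exists (lam : nat -> nat -> R) (c : nat -> nat -> nat) (t : nat -> nat -> R), forall n,
    admissible 4 (lam n) (c n) (t n) /\ fsum 4 (lam n) = 1 /\
    forall j, Rabs (x j - comb 4 (lam n) (c n) (t n) j) < / INR (S n).
Proof.
  intro Hx.
  destruct (choice (fun n (lct : (nat -> R) * (nat -> nat) * (nat -> R)) =>
    let '(lam, c, t) := lct in admissible 4 lam c t /\ fsum 4 lam = 1 /\
    forall j, Rabs (x j - comb 4 lam c t j) < / INR (S n))) as [F HF].
  - intro n. destruct (Hx (/ INR (S n)) (inv_INR_S_pos n)) as [y [Hy Hxy]].
    destruct (conv_conv_rep4 y Hy) as [lam [c [t [Hi [Hs Hyr]]]]].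
    exists (lam, c, t). split; [auto|split; [auto|]]. intro j; rewrite <- Hyr; auto.
  - exists (fun n => fst (fst (F n))), (fun n => snd (fst (F n))), (fun n => snd (F n)).
    intro n. specialize (HF n). destruct (F n) as [[lam c] t]. exact HF.
Qed.

(* The 12 real parameters of a 4-point representation range over a compact set, and the
   curve indices, being integers, are eventually constant along a convergent subsequence. *)
Lemma reps_extraction (lam : nat -> nat -> R) c t :
  (forall n, admissible 4 (lam n) (c n) (t n) /\ fsum 4 (lam n) = 1) ->
  exists phi Lam A T N, extraction phi /\
    (forall i, (i < 4)%nat -> Un_cv (fun n => lam (phi n) i) (Lam i)) /\
    (forall i, (i < 4)%nat -> Un_cv (fun n => t (phi n) i) (T i)) /\
    (forall i, (i < 4)%nat -> forall n, (N <= n)%nat -> c (phi n) i = A i).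
Proof.
  intro Hrep.
  set (u := fun n i => if Nat.ltb i 4 then lam n i
                       else if Nat.ltb i 8 then INR (c n (i - 4)%nat) else t n (i - 8)%nat).
  assert (Hb : forall n i, (i < 12)%nat -> 0 <= u n i <= 1 + INR m0 + PI).
  { intros n i Hi. destruct (Hrep n) as [Hc Hs]. unfold u.
    assert (0 <= INR m0) by apply pos_INR. assert (HPI := PI_RGT_0).
    destruct (Nat.ltb_spec i 4); [|destruct (Nat.ltb_spec i 8)].
    - destruct (Hc i) as [? _]; auto. split; auto.
      assert (lam n i <= fsum 4 (lam n)) by (apply fsum_le_term; auto; intros; apply Hc; auto). lra.
    - destruct (Hc (i - 4)%nat) as [_ [Hcm _]]; [lia|]. split; [apply pos_INR|].
      apply lt_INR in Hcm. lra.
    - destruct (Hc (i - 8)%nat) as [_ [_ Ht]]; [lia|]. lra. }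
  destruct (bounded_family_cv_extraction 12 u _ _ Hb) as [l [phi [Hphi Hcv]]].
  destruct (eventually_const_family (fun n i => c (phi n) i) 4) as [A [N HA]].
  { intros i Hi. apply (Un_cv_INR_eventually_const _ (l (4 + i)%nat)).
    assert (E := Hcv (4 + i)%nat ltac:(lia)). unfold u in E.
    destruct (Nat.ltb_spec (4 + i) 4); [lia|]. destruct (Nat.ltb_spec (4 + i) 8); [|lia].
    replace (4 + i - 4)%nat with i in E by lia; exact E. }
  exists phi, l, A, (fun i => l (8 + i)%nat), N. split; [exact Hphi|split; [|split; [|exact HA]]].
  - intros i Hi. assert (E := Hcv i ltac:(lia)). unfold u in E.
    destruct (Nat.ltb_spec i 4); [exact E|lia].
  - intros i Hi. assert (E := Hcv (8 + i)%nat ltac:(lia)). unfold u in E.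
    destruct (Nat.ltb_spec (8 + i) 4); [lia|]. destruct (Nat.ltb_spec (8 + i) 8); [lia|].
    replace (8 + i - 8)%nat with i in E by lia; exact E.
Qed.

Lemma conv_curves_closed :
  (forall a (j : Fin.t 3) s, continuity_pt (fun t => gs a t j) s) -> closed (conv curves_union).
Proof.
  intros Hcont x Hx.
  destruct (conv_curves_closure_reps x Hx) as [lam [c [t Hrep]]].
  destruct (reps_extraction lam c t ltac:(intro n; split; apply Hrep))
    as [phi [Lam [A [T [N [Hphi [HLam [HT HA]]]]]]]].
  assert (Hadm : forall n, admissible 4 (lam (phi n)) (c (phi n)) (t (phi n))) by (intro; apply Hrep).
  apply (conv_rep_conv 4). exists Lam, A, T. split; [|split].
  - intros i Hi. split; [|split].
    + apply (Un_cv_ge_const (fun n => lam (phi n) i)); auto. intro n; apply Hadm; auto.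
    + rewrite <- (HA i Hi N (le_n _)). apply Hadm; auto.
    + split; [apply (Un_cv_ge_const (fun n => t (phi n) i))|apply (Un_cv_le_const (fun n => t (phi n) i))];
        auto; intro n; apply Hadm; auto.
  - apply (UL_sequence (fun n => fsum 4 (lam (phi n)))).
    + apply (Un_cv_fsum 4 (fun n => lam (phi n))); auto.
    + apply (Un_cv_eventually_eq _ (fun _ => 1) _ 0%nat); [intros n _; apply Hrep|apply Un_cv_const].
  - intro j. apply (UL_sequence (fun n => comb 4 (lam (phi n)) (c (phi n)) (t (phi n)) j)).
    + apply Un_cv_of_rate. intro n. destruct (Hrep (phi n)) as [_ [_ Hd]].
      rewrite Rabs_minus_sym. eapply Rlt_le_trans; [apply Hd|].
      assert (Hge := extraction_ge phi Hphi n).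
      apply Rinv_le_contravar; [apply lt_0_INR; lia|apply le_INR; lia].
    + apply (Un_cv_fsum 4 (fun n i => lam (phi n) i * gs (c (phi n) i) (t (phi n) i) j)).
      intros i Hi. apply CV_mult; [apply HLam; auto|].
      apply (Un_cv_eventually_eq _ (fun n => gs (A i) (t (phi n) i) j) _ N);
        [intros n Hn; rewrite HA; auto|].
      apply (continuity_seq (fun s => gs (A i) s j)); [apply Hcont|apply HT; auto].
Qed.

End CurveFamily.

(** * Homogenization *)

Definition homog (C : set_ 3) : set_ 4 :=
  fun w => exists lam c, 0 <= lam /\ C c /\ w = vscale lam (lift1 c).

Definition ext0 (g : vec 3) : vec 4 := mk4 (g ix) (g iy) (g iz) 0.

Definition head3 (w : vec 4) : vec 3 := mk3 (w ix) (w iy) (w iz).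

Lemma homog_lift (C : set_ 3) c : C c -> homog C (lift1 c).
Proof.
  intro H; exists 1, c; split; [lra|split; auto].
  apply functional_extensionality; intro; unfold vscale; ring.
Qed.

Lemma homog_mono (A B : set_ 3) : subset A B -> subset (homog A) (homog B).
Proof. intros H w [l [c [Hl [Hc ->]]]]; exists l, c; auto. Qed.

Lemma homog_is_cone (C : set_ 3) : is_cone (homog C).
Proof.
  intros a x Ha [l [c [Hl [Hc ->]]]]. exists (a * l), c; split; [nra|split; auto].
  apply functional_extensionality; intro j; unfold vscale; ring.
Qed.

Lemma homog_convex (C : set_ 3) : convex C -> convex (homog C).
Proof.
  intros HC x y t [l1 [c1 [Hl1 [H1 ->]]]] [l2 [c2 [Hl2 [H2 ->]]]] Ht.
  set (L := t * l1 + (1 - t) * l2).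
  destruct (Req_dec L 0) as [HL|HL].
  - assert (t * l1 = 0 /\ (1 - t) * l2 = 0) as [E1 E2] by (unfold L in HL; split; nra).
    exists 0, c1; split; [lra|split; auto].
    apply vec4_ext; unfold vadd, vscale, lift1; cbn; rewrite <- !Rmult_assoc, E1, E2; ring.
  - assert (HLp : 0 < L) by (unfold L in *; nra).
    set (s := t * l1 / L).
    assert (Hs : 0 <= s <= 1).
    { unfold s; split; [apply Rmult_le_pos; [nra|apply Rlt_le, Rinv_0_lt_compat; auto]|].
      apply (Rmult_le_reg_r L); auto. unfold Rdiv; rewrite Rmult_assoc, Rinv_l by lra. unfold L; nra. }
    exists L, (vadd (vscale s c1) (vscale (1 - s) c2)); split; [lra|split; [apply HC; auto|]].
    apply vec4_ext; unfold vadd, vscale, lift1, s, L in *; cbn; field; auto.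
Qed.

Lemma cone_lift_homog (C : set_ 3) : convex C ->
  cone (fun p => exists c, C c /\ p = lift1 c) = homog C.
Proof.
  intro HC. apply functional_extensionality; intro w; apply propositional_extensionality; split.
  - intros [lam [s [Hl [Hs ->]]]].
    assert (Hs' : exists c, C c /\ s = lift1 c).
    { apply Hs; [|intros p Hp; exact Hp].
      intros x y t [c1 [H1 ->]] [c2 [H2 ->]] Ht.
      exists (vadd (vscale t c1) (vscale (1 - t) c2)); split; [apply HC; auto|].
      apply vec4_ext; unfold vadd, vscale, lift1; cbn; ring. }
    destruct Hs' as [c [Hc ->]]. exists lam, c; auto.
  - intros [lam [c [Hl [Hc ->]]]]. exists lam, (lift1 c); split; auto; split; auto.
    apply subset_conv; exists c; auto.
Qed.

Lemma scaled_coord_close a b lam s M delta :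
  Rabs b <= M -> Rabs (a - lam * b) < delta -> Rabs (s - lam) < delta ->
  Rabs (a - s * b) < delta * (1 + M).
Proof.
  intros Hb Ha Hs.
  replace (a - s * b) with ((a - lam * b) + - ((s - lam) * b)) by ring.
  eapply Rle_lt_trans; [apply Rabs_triang|]. rewrite Rabs_Ropp, Rabs_mult.
  assert (Rabs (s - lam) * Rabs b <= delta * M)
    by (apply Rmult_le_compat; try apply Rabs_pos; lra).
  lra.
Qed.

Section HomogClosed.

Variable C : set_ 3.
Variable M : R.
Hypothesis C_bounded : forall c j, C c -> Rabs (c j) <= M.

Lemma homog_closure_coord w eps : closure (homog C) w -> 0 < eps ->
  exists lam c, 0 <= lam /\ C c /\ Rabs (w iw - lam) < eps /\
    forall j, Rabs (head3 w j - w iw * c j) < eps * (1 + M).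
Proof.
  intros Hw He. destruct (Hw eps He) as [y [[lam [c [Hl [Hc ->]]]] Hy]].
  unfold vscale, lift1 in Hy. cbn in Hy.
  assert (H4 := Hy iw). cbn in H4. rewrite Rmult_1_r in H4.
  assert (Hj : forall j, Rabs (head3 w j - lam * c j) < eps)
    by (apply fin3_ind; [apply (Hy ix)|apply (Hy iy)|apply (Hy iz)]).
  exists lam, c. split; [auto|split; [auto|split; [auto|]]].
  intro j. apply (scaled_coord_close _ _ lam); [apply C_bounded; auto|apply Hj|].
  exact H4.
Qed.

Lemma homog_closure_last_ge0 w : closure (homog C) w -> 0 <= w iw.
Proof.
  intro Hw. apply Rnot_lt_le; intro Hn.
  destruct (homog_closure_coord w (- w iw) Hw ltac:(lra)) as [lam [c [Hl [_ [H4 _]]]]].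
  apply Rabs_def2 in H4. lra.
Qed.

Lemma homog_closure_bound_pos w : closure (homog C) w -> 0 < 1 + M.
Proof.
  intro Hw. destruct (homog_closure_coord w 1 Hw Rlt_0_1) as [_ [c [_ [Hc _]]]].
  assert (H := C_bounded c ix Hc). assert (H0 := Rabs_pos (c ix)). lra.
Qed.

Lemma homog_closure_last0 w : closure (homog C) w -> w iw = 0 -> homog C w.
Proof.
  intros Hw H0. assert (HM := homog_closure_bound_pos w Hw).
  assert (Hz : forall j, head3 w j = 0).
  { intro j. destruct (Req_dec (head3 w j) 0) as [|Hn]; auto. exfalso.
    assert (Ha := Rabs_pos_lt _ Hn).
    destruct (homog_closure_coord w (Rabs (head3 w j) / (1 + M)) Hw
                ltac:(apply Rdiv_lt_0_compat; lra)) as [_ [c [_ [_ [_ Hc]]]]].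
    specialize (Hc j). rewrite H0, Rmult_0_l, Rminus_0_r in Hc.
    replace (Rabs (head3 w j) / (1 + M) * (1 + M)) with (Rabs (head3 w j)) in Hc by (field; lra).
    lra. }
  destruct (homog_closure_coord w 1 Hw Rlt_0_1) as [_ [c [_ [Hc _]]]].
  exists 0, c. split; [lra|split; auto].
  assert (Hx := Hz ix); assert (Hy := Hz iy); assert (Hzz := Hz iz); cbn in Hx, Hy, Hzz.
  apply vec4_ext; unfold vscale, lift1; cbn; rewrite ?Hx, ?Hy, ?Hzz, ?H0; ring.
Qed.

Hypothesis C_closed : closed C.

Lemma homog_closure_last_pos w : closure (homog C) w -> 0 < w iw -> homog C w.
Proof.
  intros Hw Hp. assert (HM := homog_closure_bound_pos w Hw).
  exists (w iw), (vscale (/ w iw) (head3 w)). split; [lra|split].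
  - apply C_closed. intros eps He.
    destruct (homog_closure_coord w (eps * w iw / (1 + M)) Hw
                ltac:(apply Rdiv_lt_0_compat; nra)) as [_ [c [_ [Hc [_ Hcl]]]]].
    exists c; split; auto. intro j. specialize (Hcl j).
    replace (eps * w iw / (1 + M) * (1 + M)) with (eps * w iw) in Hcl by (field; lra).
    unfold vscale. replace (/ w iw * head3 w j - c j) with ((head3 w j - w iw * c j) / w iw)
      by (field; lra).
    unfold Rdiv; rewrite Rabs_mult, (Rabs_pos_eq (/ w iw)) by (apply Rlt_le, Rinv_0_lt_compat; lra).
    apply (Rmult_lt_reg_r (w iw)); auto. rewrite Rmult_assoc, Rinv_l by lra. lra.
  - apply vec4_ext; unfold vscale, lift1; cbn; field; lra.
Qed.

Lemma homog_closed : closed (homog C).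
Proof.
  intros w Hw. destruct (Req_dec (w iw) 0) as [H0|Hn].
  - apply homog_closure_last0; auto.
  - apply homog_closure_last_pos; auto. assert (H := homog_closure_last_ge0 w Hw). lra.
Qed.

End HomogClosed.

Lemma homog_tangent (C : set_ 3) g :
  tangent_cone vzero C g -> tangent_cone (lift1 vzero) (homog C) (ext0 g).
Proof.
  intros Hg eps He. destruct (Hg eps He) as [d [[e [He' Hd]] Hclose]].
  exists (ext0 d). split.
  - exists e; split; auto.
    replace (vadd (lift1 vzero) (vscale e (ext0 d))) with (lift1 (vadd vzero (vscale e d)));
      [apply homog_lift; auto|].
    apply vec4_ext; unfold vadd, vscale, lift1, ext0, vzero; cbn; ring.
  - apply fin4_ind; unfold ext0; cbn; [apply Hclose|apply Hclose|apply Hclose|].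
    rewrite Rminus_diag, Rabs_R0; auto.
Qed.

Lemma homog_span (F : set_ 3) g : F vzero -> span F g -> span (homog F) (ext0 g).
Proof.
  intros H0 Hg V [V0 [Vadd Vscale]] HFV.
  apply (Hg (fun h => V (ext0 h))).
  - split; [|split].
    + replace (ext0 vzero) with (@vzero 4) by (apply vec4_ext; reflexivity). exact V0.
    + intros x y Hx Hy. replace (ext0 (vadd x y)) with (vadd (ext0 x) (ext0 y)); [auto|].
      apply vec4_ext; unfold vadd, ext0; cbn; ring.
    + intros a x Hx. replace (ext0 (vscale a x)) with (vscale a (ext0 x)); [auto|].
      apply vec4_ext; unfold vscale, ext0; cbn; ring.
  - intros f Hf. replace (ext0 f) with (vadd (lift1 f) (vscale (-1) (lift1 vzero))).
    + apply Vadd; [|apply Vscale]; apply HFV, homog_lift; auto.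
    + apply vec4_ext; unfold vadd, vscale, lift1, ext0, vzero; cbn; ring.
Qed.

Lemma quarter_trig t : 0 <= t <= PI/4 ->
  0 <= sin t <= 1 /\ 0 <= cos t <= 1 /\ sin t * sin t + cos t * cos t = 1.
Proof.
  intro Ht. assert (HP := PI_RGT_0).
  assert (Hs : 0 <= sin t) by (apply sin_ge_0; lra).
  assert (Hc : 0 <= cos t) by (apply cos_ge_0; lra).
  assert (H2 := sin2_cos2 t). unfold Rsqr in H2. nra.
Qed.

Lemma quarter_one_minus_cos t : 0 <= t <= PI/4 ->
  0 <= 1 - cos t <= sin t * sin t /\ sin t * sin t <= 2 * (1 - cos t).
Proof. intro Ht. destruct (quarter_trig t Ht) as [Hs [Hc H2]]. nra. Qed.

Lemma quarter_trig_pos t : 0 < t <= PI/4 -> 0 < sin t /\ cos t < 1.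
Proof.
  intro Ht. assert (HP := PI_RGT_0).
  assert (Hs : 0 < sin t) by (apply sin_gt_0; lra).
  destruct (quarter_trig t ltac:(lra)) as [_ [Hc H2]]. split; auto; nra.
Qed.

Lemma PI4_bounds : 0 <= PI/4 <= PI/4.
Proof. assert (H := PI_RGT_0); lra. Qed.

Lemma small_quarter_angle eps : 0 < eps -> exists t, 0 < t <= PI/4 /\ sin t < eps.
Proof.
  intro He. assert (HP := PI_RGT_0). set (t := Rmin (eps/2) (PI/4)).
  assert (Ht : 0 < t <= PI/4) by (split; [apply Rmin_glb_lt; lra|apply Rmin_r]).
  exists t; split; auto.
  assert (t <= eps/2) by apply Rmin_l. assert (sin t < t) by (apply sin_lt_x; lra). lra.
Qed.

Lemma cos_sin_PI4 : sin (PI/4) = cos (PI/4) /\ cos (PI/4) * cos (PI/4) = 1/2.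
Proof.
  rewrite sin_PI4, cos_PI4. split; auto.
  unfold Rdiv; rewrite Rmult_1_l, <- Rinv_mult, sqrt_sqrt by lra. lra.
Qed.

Definition gsC (a : nat) (t : R) : vec 3 :=
  match a with 0%nat => gamma1 t | 1%nat => gamma2 t | 2%nat => gamma3 t | _ => gamma4 t end.
Definition gsF (a : nat) (t : R) : vec 3 :=
  match a with 0%nat => gamma3 t | _ => gamma4 t end.

Lemma Cset_curves : Cset = conv (curves_union gsC 4).
Proof.
  unfold Cset; f_equal; apply functional_extensionality; intro p;
    apply propositional_extensionality; split.
  - intros [[t [Ht ->]]|[[t [Ht ->]]|[[t [Ht ->]]|[t [Ht ->]]]]];
      [exists 0%nat|exists 1%nat|exists 2%nat|exists 3%nat]; exists t; repeat split; first [lia|lra].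
  - intros [a [t [Ha [Ht ->]]]]. destruct a as [|[|[|[|a]]]]; [| | | |lia].
    + left; exists t; auto.
    + right; left; exists t; auto.
    + right; right; left; exists t; auto.
    + right; right; right; exists t; auto.
Qed.

Lemma Fface_curves : Fface = conv (curves_union gsF 2).
Proof.
  unfold Fface; f_equal; apply functional_extensionality; intro p;
    apply propositional_extensionality; split.
  - intros [[t [Ht ->]]|[t [Ht ->]]]; [exists 0%nat|exists 1%nat]; exists t; repeat split; first [lia|lra].
  - intros [a [t [Ha [Ht ->]]]]. destruct a as [|[|a]]; [left|right|lia]; exists t; auto.
Qed.

Lemma gamma_continuous (g : R -> vec 3) :
  (forall s, continuity_pt (fun t => g t ix) s) -> (forall s, continuity_pt (fun t => g t iy) s) ->
  (forall s, continuity_pt (fun t => g t iz) s) -> forall j s, continuity_pt (fun t => g t j) s.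
Proof. intros H1 H2 H3 j; pattern j; apply fin3_ind; auto. Qed.

Lemma gsC_continuous a j s : continuity_pt (fun t => gsC a t j) s.
Proof. revert j s; destruct a as [|[|[|a]]]; apply gamma_continuous; intro; cbn; reg. Qed.

Lemma gsF_continuous a j s : continuity_pt (fun t => gsF a t j) s.
Proof. revert j s; destruct a as [|a]; apply gamma_continuous; intro; cbn; reg. Qed.

Lemma Cset_closed : closed Cset.
Proof. rewrite Cset_curves; apply conv_curves_closed, gsC_continuous. Qed.

Lemma Fface_closed : closed Fface.
Proof. rewrite Fface_curves; apply conv_curves_closed, gsF_continuous. Qed.

Definition affine3 (a b c d : R) (p : vec 3) := a * p ix + b * p iy + c * p iz + d.

Lemma convex_affine_ge0 a b c d : convex (fun p => 0 <= affine3 a b c d p).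
Proof.
  intros x y t Hx Hy Ht. unfold affine3, vadd, vscale in *.
  assert (0 <= t * (a * x ix + b * x iy + c * x iz + d)) by (apply Rmult_le_pos; lra).
  assert (0 <= (1 - t) * (a * y ix + b * y iy + c * y iz + d)) by (apply Rmult_le_pos; lra).
  nra.
Qed.

Lemma Cset_affine_ge0 a b c d :
  (forall t, 0 <= t <= PI/4 -> 0 <= affine3 a b c d (gamma1 t) /\ 0 <= affine3 a b c d (gamma2 t) /\
                               0 <= affine3 a b c d (gamma3 t) /\ 0 <= affine3 a b c d (gamma4 t)) ->
  forall p, Cset p -> 0 <= affine3 a b c d p.
Proof.
  intros H p Hp. apply Hp; [apply convex_affine_ge0|].
  intros q [[t [Ht ->]]|[[t [Ht ->]]|[[t [Ht ->]]|[t [Ht ->]]]]]; apply H; auto.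
Qed.

Lemma Fface_affine_ge0 a b c d :
  (forall t, 0 <= t <= PI/4 -> 0 <= affine3 a b c d (gamma3 t) /\ 0 <= affine3 a b c d (gamma4 t)) ->
  forall p, Fface p -> 0 <= affine3 a b c d p.
Proof.
  intros H p Hp. apply Hp; [apply convex_affine_ge0|].
  intros q [[t [Ht ->]]|[t [Ht ->]]]; apply H; auto.
Qed.

Ltac quarter t Ht :=
  destruct (quarter_trig t Ht) as [? [? ?]]; destruct (quarter_one_minus_cos t Ht) as [? ?].

Lemma Cset_z_le0 p : Cset p -> p iz <= 0.
Proof.
  intro Hp. assert (H : 0 <= affine3 0 0 (-1) 0 p); [|unfold affine3 in H; lra].
  apply Cset_affine_ge0; auto. intros t Ht; quarter t Ht; unfold affine3; cbn; lra.
Qed.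

Lemma Fface_z_eq0 p : Fface p -> p iz = 0.
Proof.
  intro Hp.
  assert (0 <= affine3 0 0 1 0 p) by (apply Fface_affine_ge0; auto; intros t Ht; unfold affine3; cbn; lra).
  assert (0 <= affine3 0 0 (-1) 0 p) by (apply Fface_affine_ge0; auto; intros t Ht; unfold affine3; cbn; lra).
  unfold affine3 in *; lra.
Qed.

Lemma Fface_y_ge0 p : Fface p -> 0 <= p iy.
Proof.
  intro Hp. assert (H : 0 <= affine3 0 1 0 0 p); [|unfold affine3 in H; lra].
  apply Fface_affine_ge0; auto. intros t Ht; quarter t Ht; unfold affine3; cbn; lra.
Qed.

Lemma Cset_bounded p j : Cset p -> Rabs (p j) <= 1.
Proof.
  intro Hp. apply Rabs_le. revert j.
  assert (B : forall a b c, (forall t, 0 <= t <= PI/4 ->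
      0 <= affine3 a b c 1 (gamma1 t) /\ 0 <= affine3 a b c 1 (gamma2 t) /\
      0 <= affine3 a b c 1 (gamma3 t) /\ 0 <= affine3 a b c 1 (gamma4 t)) ->
      0 <= a * p ix + b * p iy + c * p iz + 1) by (intros; apply Cset_affine_ge0; auto).
  apply fin3_ind; split.
  - assert (H := B 1 0 0 ltac:(intros t Ht; quarter t Ht; unfold affine3; cbn; repeat split; lra)); lra.
  - assert (H := B (-1) 0 0 ltac:(intros t Ht; quarter t Ht; unfold affine3; cbn; repeat split; lra)); lra.
  - assert (H := B 0 1 0 ltac:(intros t Ht; quarter t Ht; unfold affine3; cbn; repeat split; lra)); lra.
  - assert (H := B 0 (-1) 0 ltac:(intros t Ht; quarter t Ht; unfold affine3; cbn; repeat split; lra)); lra.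
  - assert (H := B 0 0 1 ltac:(intros t Ht; quarter t Ht; unfold affine3; cbn; repeat split; lra)); lra.
  - assert (H := B 0 0 (-1) ltac:(intros t Ht; quarter t Ht; unfold affine3; cbn; repeat split; lra)); lra.
Qed.

Lemma gamma_at_0 : gamma1 0 = vzero /\ gamma2 0 = vzero /\ gamma3 0 = vzero.
Proof.
  repeat split; apply vec3_ext; unfold vzero; cbn; rewrite ?sin_0, ?cos_0; ring.
Qed.

Lemma gamma3_in_Fface t : 0 <= t <= PI/4 -> Fface (gamma3 t).
Proof. intro Ht; apply subset_conv; left; exists t; auto. Qed.

Lemma gamma4_in_Fface t : 0 <= t <= PI/4 -> Fface (gamma4 t).
Proof. intro Ht; apply subset_conv; right; exists t; auto. Qed.

Lemma gamma1_in_Cset t : 0 <= t <= PI/4 -> Cset (gamma1 t).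
Proof. intro Ht; apply subset_conv; left; exists t; auto. Qed.

Lemma Fface_sub_Cset : subset Fface Cset.
Proof. apply conv_mono. intros p Hp; right; right; exact Hp. Qed.

Lemma Fface_zero : Fface vzero.
Proof.
  destruct gamma_at_0 as [_ [_ <-]]. apply gamma3_in_Fface. assert (H := PI_RGT_0); lra.
Qed.

(* Points of the curves gamma1, gamma2 other than 0 lie strictly below the plane z = 0, so the
   convex set {z < 0} U F contains all four curves. *)
Lemma Cset_z0_Fface p : Cset p -> p iz = 0 -> Fface p.
Proof.
  intros Hp Hz.
  set (D := fun q : vec 3 => q iz < 0 \/ Fface q).
  assert (HD : D p); [|destruct HD as [HD|HD]; auto; lra].
  apply Hp.
  - intros x y t Hx Hy Ht. unfold D in *.
    destruct (Req_dec t 0) as [->|Ht0]; [|destruct (Req_dec t 1) as [->|Ht1]].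
    + replace (vadd (vscale 0 x) (vscale (1 - 0) y)) with y; auto.
      apply functional_extensionality; intro j; unfold vadd, vscale; ring.
    + replace (vadd (vscale 1 x) (vscale (1 - 1) y)) with x; auto.
      apply functional_extensionality; intro j; unfold vadd, vscale; ring.
    + destruct Hx as [Hx|Hx]; destruct Hy as [Hy|Hy]; unfold vadd, vscale.
      * left; nra.
      * left; rewrite (Fface_z_eq0 y Hy); nra.
      * left; rewrite (Fface_z_eq0 x Hx); nra.
      * right; apply conv_convex; auto.
  - destruct gamma_at_0 as [G1 [G2 _]].
    intros q [[t [Ht ->]]|[[t [Ht ->]]|[[t [Ht ->]]|[t [Ht ->]]]]]; unfold D.
    + destruct (Req_dec t 0) as [->|Ht0]; [right; rewrite G1; apply Fface_zero|].
      left; destruct (quarter_trig_pos t ltac:(lra)); cbn; lra.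
    + destruct (Req_dec t 0) as [->|Ht0]; [right; rewrite G2; apply Fface_zero|].
      left; destruct (quarter_trig_pos t ltac:(lra)); cbn; lra.
    + right; apply gamma3_in_Fface; auto.
    + right; apply gamma4_in_Fface; auto.
Qed.

Lemma face_Fface : face Fface Cset.
Proof.
  apply (face_of_support (fun p => p iz)); try reflexivity.
  - exact Fface_closed.
  - apply conv_convex.
  - exact Fface_sub_Cset.
  - exact Cset_z_le0.
  - exact Fface_z_eq0.
  - exact Cset_z0_Fface.
Qed.

(* gamma1 t / sin t = (0, -1, -(1 - cos t) / sin t), and (1 - cos t) / sin t <= sin t. *)
Lemma gvec_tangent_Cset : tangent_cone vzero Cset gvec.
Proof.
  intros eps He. destruct (small_quarter_angle eps He) as [t [Ht Hte]].
  destruct (quarter_trig_pos t Ht) as [Hs Hc].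
  destruct (quarter_one_minus_cos t ltac:(lra)) as [Hq _].
  exists (vscale (/ sin t) (gamma1 t)). split.
  - exists (sin t); split; auto.
    replace (vadd vzero (vscale (sin t) (vscale (/ sin t) (gamma1 t)))) with (gamma1 t);
      [apply gamma1_in_Cset; lra|].
    apply functional_extensionality; intro j; unfold vadd, vscale, vzero; field; lra.
  - assert (Hr : 0 <= (1 - cos t) / sin t <= sin t).
    { split; [apply Rmult_le_pos; [lra|apply Rlt_le, Rinv_0_lt_compat; lra]|].
      apply (Rmult_le_reg_r (sin t)); auto. unfold Rdiv; rewrite Rmult_assoc, Rinv_l; lra. }
    apply fin3_ind; unfold vscale, gvec; cbn.
    + rewrite Rmult_0_r, Rminus_diag, Rabs_R0; auto.
    + replace (-1 - / sin t * - sin t) with 0 by (field; lra). rewrite Rabs_R0; auto.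
    + replace (0 - / sin t * (cos t - 1)) with ((1 - cos t) / sin t) by (field; lra).
      rewrite Rabs_right by lra. lra.
Qed.

Lemma gvec_comb : gvec = vadd (vscale ((1 - cos (PI/4)) / (2 * cos (PI/4) - 1)) (gamma3 (PI/4)))
                              (vscale (- cos (PI/4) / (2 * cos (PI/4) - 1)) (gamma4 (PI/4))).
Proof.
  destruct cos_sin_PI4 as [E H2].
  assert (Hn : 2 * cos (PI/4) - 1 <> 0) by nra.
  apply vec3_ext; unfold vadd, vscale, gvec; cbn; rewrite ?E; field; auto.
Qed.

Lemma gvec_span_Fface : span Fface gvec.
Proof.
  intros V [_ [Vadd Vscale]] HF. rewrite gvec_comb.
  apply Vadd; apply Vscale, HF; [apply gamma3_in_Fface|apply gamma4_in_Fface]; apply PI4_bounds.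
Qed.

Lemma gvec_not_tangent_Fface : ~ tangent_cone vzero Fface gvec.
Proof.
  intro H. assert (Hy := tangent_cone_coord_ge0 Fface vzero iy gvec Fface_y_ge0 eq_refl H).
  cbn in Hy; lra.
Qed.

(** * The cone K *)

Lemma Kcone_homog : Kcone = homog Cset.
Proof. apply cone_lift_homog, conv_convex. Qed.

Lemma homog_z_eq0 (F : set_ 3) w : (forall c, F c -> c iz = 0) -> homog F w -> w iz = 0.
Proof. intros HF [l [c [_ [Hc ->]]]]. unfold vscale, lift1; cbn. rewrite (HF c Hc); ring. Qed.

Lemma homog_Cset_z0 w : homog Cset w -> w iz <= 0 /\ (w iz = 0 -> homog Fface w).
Proof.
  intros [lam [c [Hl [Hc ->]]]]. unfold vscale, lift1; cbn.
  assert (Hz := Cset_z_le0 _ Hc). split; [nra|]. intro E.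
  destruct (Req_dec lam 0) as [->|Hn].
  - exists 0, vzero; split; [lra|split; [apply Fface_zero|]].
    apply functional_extensionality; intro; unfold vscale; ring.
  - exists lam, c; split; auto; split; auto. apply Cset_z0_Fface; auto.
    apply (Rmult_eq_reg_l lam); auto; lra.
Qed.

Lemma face_homog_Fface : face (homog Fface) (homog Cset).
Proof.
  apply (face_of_support (fun w => w iz)); try reflexivity.
  - apply (homog_closed _ 1); [intros c j Hc; apply Cset_bounded, Fface_sub_Cset; auto|exact Fface_closed].
  - apply homog_convex, conv_convex.
  - apply homog_mono, Fface_sub_Cset.
  - intros w Hw; apply homog_Cset_z0; auto.
  - intros w; apply homog_z_eq0, Fface_z_eq0.
  - intros w Hw; apply homog_Cset_z0; auto.
Qed.

Lemma homog_Fface_neq : ~ set_eq (homog Fface) (homog Cset).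
Proof.
  intro H. assert (Hin : homog Cset (lift1 (gamma1 (PI/4))))
    by (apply homog_lift, gamma1_in_Cset, PI4_bounds).
  apply H, (homog_z_eq0 _ _ Fface_z_eq0) in Hin. cbn in Hin.
  destruct (quarter_trig_pos (PI/4) ltac:(assert (HP := PI4_RGT_0); lra)). lra.
Qed.

Lemma not_tangentially_exposed : ~ tangentially_exposed (homog Cset).
Proof.
  intro H.
  assert (Hx0 : homog Fface (lift1 vzero)) by (apply homog_lift, Fface_zero).
  assert (Hd : tangent_cone (lift1 vzero) (homog Fface) (ext0 gvec)).
  { apply (proj1 (H _ face_homog_Fface homog_Fface_neq _ Hx0 (ext0 gvec))). split.
    - apply homog_tangent, gvec_tangent_Cset.
    - apply homog_span; [apply Fface_zero|apply gvec_span_Fface]. }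
  assert (Hy : 0 <= ext0 gvec iy); [|cbn in Hy; lra].
  apply (tangent_cone_coord_ge0 (homog Fface) (lift1 vzero)); auto.
  intros w [l [c [Hl [Hc ->]]]]. unfold vscale, lift1; cbn.
  apply Rmult_le_pos; auto. apply Fface_y_ge0; auto.
Qed.

Lemma dot4 (x y : vec 4) : dot x y = x ix * y ix + x iy * y iy + x iz * y iz + x iw * y iw.
Proof. cbn. ring. Qed.

Lemma dual_homog_affine (C : set_ 3) a b c d :
  (forall p, C p -> 0 <= affine3 a b c d p) -> dual_cone (homog C) (mk4 a b c d).
Proof.
  intros H u [mu [p [Hmu [Hp ->]]]]. rewrite dot4; unfold vscale, lift1; cbn.
  assert (Ha := H p Hp). unfold affine3 in Ha. nra.
Qed.

Lemma orth_homog_z (F : set_ 3) lam :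
  (forall p, F p -> p iz = 0) -> orth (homog F) (mk4 0 0 lam 0).
Proof.
  intros H u [mu [p [Hmu [Hp ->]]]]. rewrite dot4; unfold vscale, lift1; cbn.
  rewrite (H p Hp). ring.
Qed.

(* Along gamma1 the third coordinate is only quadratic in sin t, so it cannot compensate a
   positive second coordinate of a dual vector. *)
Lemma dual_homog_Cset_y_le0 k : dual_cone (homog Cset) k -> k iw = 0 -> k iy <= 0.
Proof.
  intros Hk Hw. apply Rnot_lt_le; intro Hy.
  set (kz := k iz). assert (Hkz := Rabs_pos kz).
  destruct (small_quarter_angle (k iy / (Rabs kz + 1)) ltac:(apply Rdiv_lt_0_compat; lra))
    as [t [Ht Hst]].
  destruct (quarter_trig_pos t Ht) as [Hs _].
  destruct (quarter_one_minus_cos t ltac:(lra)) as [[Hq0 Hq] _].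
  assert (Hd := Hk _ (homog_lift _ _ (gamma1_in_Cset t ltac:(lra)))).
  rewrite dot4 in Hd. unfold lift1 in Hd; cbn in Hd. rewrite Hw in Hd. fold kz in Hd.
  assert (Hsz : sin t * (Rabs kz + 1) < k iy).
  { apply (Rmult_lt_compat_r (Rabs kz + 1)) in Hst; [|lra].
    unfold Rdiv in Hst; rewrite Rmult_assoc, Rinv_l in Hst by lra. lra. }
  assert (kz * (cos t - 1) <= Rabs kz * (sin t * sin t)).
  { assert (- kz <= Rabs kz) by (rewrite <- Rabs_Ropp; apply Rle_abs). nra. }
  nra.
Qed.

Definition wvec : vec 4 := mk4 0 1 0 0.

Lemma wvec_not_msum : ~ msum (dual_cone (homog Cset)) (orth (homog Fface)) wvec.
Proof.
  intros [k [f [Hk [Hf E]]]].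
  destruct cos_sin_PI4 as [Ea H2].
  assert (Hc : 0 < cos (PI/4)) by (apply cos_gt_0; assert (HP := PI_RGT_0); lra).
  assert (O0 := Hf _ (homog_lift _ _ Fface_zero)).
  assert (O3 := Hf _ (homog_lift _ _ (gamma3_in_Fface _ PI4_bounds))).
  assert (O4 := Hf _ (homog_lift _ _ (gamma4_in_Fface _ PI4_bounds))).
  rewrite dot4 in O0, O3, O4. unfold lift1, vzero in O0, O3, O4; cbn in O0, O3, O4.
  rewrite Ea in O3, O4.
  assert (Ek : forall j, k j = wvec j - f j) by (intro j; rewrite E; unfold vadd; ring).
  assert (Hw : k iw = 0) by (rewrite Ek; cbn; lra).
  assert (Hy : k iy = 1).
  { rewrite Ek; cbn. set (a := cos (PI/4)) in *.
    assert (f iy * (2 * a - 1) = 0) by nra.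
    assert (2 * a - 1 <> 0) by nra.
    assert (f iy = 0) by (apply (Rmult_eq_reg_r (2 * a - 1)); auto; lra). lra. }
  assert (H := dual_homog_Cset_y_le0 k Hk Hw). lra.
Qed.

(* wvec = (0,1,-lam,e) + (0,0,lam,0) up to e; the first summand is dual to K as soon as
   lam * e >= 2, by AM-GM along gamma1. *)
Lemma wvec_in_closure : closure (msum (dual_cone (homog Cset)) (orth (homog Fface))) wvec.
Proof.
  intros eps He. set (e := eps / 2). set (lam := 2 / e + 1).
  assert (Hee : 0 < e) by (unfold e; lra).
  assert (Hle : lam * e = 2 + e) by (unfold lam; field; lra).
  assert (Hl1 : 1 <= lam) by (assert (0 < 2 / e) by (apply Rdiv_lt_0_compat; lra); unfold lam; lra).
  exists (vadd (mk4 0 1 (- lam) e) (mk4 0 0 lam 0)). split.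
  - exists (mk4 0 1 (- lam) e), (mk4 0 0 lam 0); split; [|split; auto].
    + apply dual_homog_affine, Cset_affine_ge0. intros t Ht.
      quarter t Ht. unfold affine3; cbn. repeat split.
      * assert (Hq1 : e * (lam * (1 - cos t)) >= sin t * sin t) by nra.
        assert (Hq2 : 0 <= e * (- sin t + lam * (1 - cos t) + e)) by nra.
        assert (0 <= - sin t + lam * (1 - cos t) + e); [|lra].
        apply (Rmult_le_reg_l e); lra.
      * nra.
      * lra.
      * lra.
    + apply orth_homog_z, Fface_z_eq0.
  - apply fin4_ind; unfold wvec, vadd; cbn.
    + replace (0 - (0 + 0)) with 0 by ring; rewrite Rabs_R0; auto.
    + replace (1 - (1 + 0)) with 0 by ring; rewrite Rabs_R0; auto.
    + replace (0 - (- lam + lam)) with 0 by ring; rewrite Rabs_R0; auto.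
    + replace (0 - (e + 0)) with (- e) by ring. rewrite Rabs_Ropp, Rabs_right by lra. unfold e; lra.
Qed.

Lemma not_facially_dual_complete : ~ facially_dual_complete (homog Cset).
Proof.
  intro H. apply wvec_not_msum.
  apply (H _ face_homog_Fface (ex_intro _ _ (homog_lift _ _ Fface_zero)) homog_Fface_neq).
  apply wvec_in_closure.
Qed.

Theorem mainTheorem6 :
  face Fface Cset /\ Fface vzero /\
  ~ set_eq (fun d => tangent_cone vzero Cset d /\ span Fface d) (tangent_cone vzero Fface) /\
  (tangent_cone vzero Cset gvec /\ span Fface gvec /\ ~ tangent_cone vzero Fface gvec) /\
  (closed Kcone /\ convex Kcone /\ is_cone Kcone) /\
  ~ tangentially_exposed Kcone /\
  ~ facially_dual_complete Kcone.
Proof.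
  rewrite Kcone_homog.
  split; [exact face_Fface|split; [exact Fface_zero|]].
  split.
  { intro H. apply gvec_not_tangent_Fface, (proj1 (H gvec)). split; [apply gvec_tangent_Cset|apply gvec_span_Fface]. }
  split; [split; [exact gvec_tangent_Cset|split; [exact gvec_span_Fface|exact gvec_not_tangent_Fface]]|].
  split; [split; [|split]|split].
  - apply (homog_closed _ 1); [intros c j; apply Cset_bounded|exact Cset_closed].
  - apply homog_convex, conv_convex.
  - apply homog_is_cone.
  - exact not_tangentially_exposed.
  - exact not_facially_dual_complete.
Qed.
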